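(* Let $z\in\mathbb{C}$ and $0<b<1$, and assume that for all $t\in[b,1]$ we have $|1-tz|\le C$ for some constant $C<1$. Let $\theta = \arctan\left(\pi/|\log C|\right)$. If $m\ge 1$ is an integer with $m\theta\le\pi/2$, then the real part of $\log^m(1-tz)$ does not change sign for $t\in[b,1]$, and the imaginary part of $\log^m(1-tz)$ does not change sign for $t\in[b,1]$.
   Context: $\log$ denotes the principal branch of the complex logarithm. *)

From Stdlib Require Import Reals.
From Coquelicot Require Import Coquelicot.
Open Scope R_scope.

(* Principal argument Arg w in (-PI, PI] (the usual atan2 convention, Arg 0 = 0). *)
Definition Carg (w : Complex.C) : R :=
  let x := fst w in let y := snd w in
  if Rlt_dec 0 x then atan (y / x)
  else if Rlt_dec x 0 then
    (if Rle_dec 0 y then atan (y / x) + PI else atan (y / x) - PI)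
  else (if Rlt_dec 0 y then PI / 2
        else if Rlt_dec y 0 then - (PI / 2) else 0).

Definition Clog (w : Complex.C) : Complex.C := (ln (Cmod w), Carg w).

Fixpoint Cpown (w : Complex.C) (m : nat) : Complex.C :=
  match m with
  | O => RtoC 1
  | S k => Cmult w (Cpown w k)
  end.

From Stdlib Require Import Reals Lra.
From Coquelicot Require Import Coquelicot.
Open Scope R_scope.

(* Put w = 1 - t z and L = Log w = ln|w| + i Arg w.  As |w| <= C < 1, the number -L has
   real part -ln|w| >= |ln C| > 0 and imaginary part -Arg w in [-pi, pi], so it lies in the
   sector |arg| <= theta = atan (pi / |ln C|).  Since m theta <= pi/2, (-L)^m lies in the
   closed right half-plane, and its imaginary part has the sign of -Arg w, i.e. of -Im w.
   Now L^m = (-1)^m (-L)^m, and Im w = -t Im z has a sign independent of t > 0. *)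

Lemma atan_le x y : x <= y -> atan x <= atan y.
Proof.
  intros [Hlt | ->]; [now left; apply atan_increasing | apply Rle_refl].
Qed.

Lemma atan_nonneg x : 0 <= x -> 0 <= atan x.
Proof. intros H; rewrite <- atan_0; now apply atan_le. Qed.

Lemma atan_nonpos x : x <= 0 -> atan x <= 0.
Proof. intros H; rewrite <- atan_0; now apply atan_le. Qed.

Lemma atan_neg x : x < 0 -> atan x < 0.
Proof. intros H; rewrite <- atan_0; now apply atan_increasing. Qed.

Lemma Rdiv_le_compat a b c d : 0 <= a <= b -> 0 < d <= c -> a / c <= b / d.
Proof.
  intros [Ha Hab] [Hd Hdc]; unfold Rdiv.
  apply Rmult_le_compat; try lra.
  - left; apply Rinv_0_lt_compat; lra.
  - now apply Rinv_le_contravar.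
Qed.

Lemma Carg_bound w : Rabs (Carg w) <= PI.
Proof.
  destruct w as [x y]; unfold Carg; simpl.
  pose proof PI_RGT_0; destruct (atan_bound (y / x)).
  apply Rabs_le.
  destruct (Rlt_dec 0 x); [lra|].
  destruct (Rlt_dec x 0) as [Hx|Hx]; [|repeat destruct Rlt_dec; lra].
  assert (e : y / x * x = y) by (field; lra).
  destruct (Rle_dec 0 y).
  - assert (atan (y / x) <= 0) by (apply atan_nonpos; nra); lra.
  - assert (0 <= atan (y / x)) by (apply atan_nonneg; nra); lra.
Qed.

Lemma Carg_nonneg w : 0 <= Im w -> 0 <= Carg w.
Proof.
  destruct w as [x y]; unfold Carg; simpl; intros Hy.
  pose proof PI_RGT_0; destruct (atan_bound (y / x)).
  destruct (Rlt_dec 0 x).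
  - apply atan_nonneg, Rdiv_le_0_compat; lra.
  - repeat destruct Rlt_dec; try destruct Rle_dec; lra.
Qed.

Lemma Carg_neg w : Im w < 0 -> Carg w < 0.
Proof.
  destruct w as [x y]; unfold Carg; simpl; intros Hy.
  pose proof PI_RGT_0; destruct (atan_bound (y / x)).
  destruct (Rlt_dec 0 x).
  - apply atan_neg, Rdiv_neg_pos; lra.
  - repeat destruct Rlt_dec; try destruct Rle_dec; lra.
Qed.

Lemma Cpown_Cpow w m : Cpown w m = Cpow w m.
Proof. reflexivity. Qed.

Lemma Cpow_polar r p m :
  Cpow (r * cos p, r * sin p) m = (r ^ m * cos (INR m * p), r ^ m * sin (INR m * p)).
Proof.
  induction m as [|m IH].
  - simpl; rewrite Rmult_0_l, cos_0, sin_0; unfold RtoC; f_equal; ring.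
  - rewrite Cpow_S, IH, S_INR.
    replace ((INR m + 1) * p) with (p + INR m * p) by ring.
    rewrite cos_plus, sin_plus; unfold Cmult; simpl; f_equal; ring.
Qed.

Lemma Re_RtoC_mult a w : Re (RtoC a * w)%C = a * Re w.
Proof. destruct w; unfold Cmult, Re, Im; simpl; ring. Qed.

Lemma Im_RtoC_mult a w : Im (RtoC a * w)%C = a * Im w.
Proof. destruct w; unfold Cmult, Re, Im; simpl; ring. Qed.

Lemma Cpow_opp w m : Cpow w m = (RtoC ((-1) ^ m) * Cpow (- w) m)%C.
Proof.
  rewrite RtoC_pow, <- Cpow_mult_l; f_equal.
  apply injective_projections; simpl; ring.
Qed.

Section Sector.

Variables (x y : R) (m : nat).
Hypothesis Hx : 0 < x.
Hypothesis Hsector : INR m * atan (Rabs y / x) <= PI / 2.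

Let p := atan (y / x).

Lemma sector_angle_bound : - (PI / 2) <= INR m * p <= PI / 2.
Proof.
  assert (Habs : Rabs (y / x) = Rabs y / x) by (rewrite Rabs_div, (Rabs_pos_eq x); lra).
  assert (Hp : - atan (Rabs y / x) <= p <= atan (Rabs y / x)).
  { rewrite <- Habs, <- atan_opp; unfold p.
    destruct (proj1 (Rabs_le_between (y / x) _) (Rle_refl _)).
    split; now apply atan_le. }
  pose proof (pos_INR m); split; nra.
Qed.

Lemma sector_cos_pos : 0 < cos p.
Proof. destruct (atan_bound (y / x)); apply cos_gt_0; unfold p; lra. Qed.

Let r := x / cos p.

Lemma Cpow_sector_polar : Cpow (x, y) m = (r ^ m * cos (INR m * p), r ^ m * sin (INR m * p)).
Proof.
  pose proof sector_cos_pos as Hcos.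
  rewrite <- Cpow_polar; f_equal; apply injective_projections; simpl; unfold r.
  - field; lra.
  - replace (x / cos p * sin p) with (x * tan p) by (unfold tan; field; lra).
    unfold p; rewrite tan_atan; field; lra.
Qed.

Lemma sector_radius_pow_nonneg : 0 <= r ^ m.
Proof. apply pow_le, Rdiv_le_0_compat; [lra | apply sector_cos_pos]. Qed.

Lemma Re_Cpow_sector_nonneg : 0 <= Re (Cpow (x, y) m).
Proof.
  rewrite Cpow_sector_polar; simpl.
  apply Rmult_le_pos; [apply sector_radius_pow_nonneg|].
  destruct sector_angle_bound; apply cos_ge_0; lra.
Qed.

Lemma Im_Cpow_sector_nonneg : 0 <= y -> 0 <= Im (Cpow (x, y) m).
Proof.
  intros Hy; rewrite Cpow_sector_polar; simpl.
  assert (Hp : 0 <= p) by (apply atan_nonneg, Rdiv_le_0_compat; lra).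
  pose proof (pos_INR m); pose proof PI_RGT_0; destruct sector_angle_bound.
  apply Rmult_le_pos; [apply sector_radius_pow_nonneg|].
  apply sin_ge_0; nra.
Qed.

Lemma Im_Cpow_sector_nonpos : y <= 0 -> Im (Cpow (x, y) m) <= 0.
Proof.
  intros Hy; rewrite Cpow_sector_polar; simpl.
  assert (Hp : p <= 0).
  { apply atan_nonpos; unfold Rdiv.
    apply Rmult_le_0_r; [lra | left; now apply Rinv_0_lt_compat]. }
  pose proof (pos_INR m); pose proof PI_RGT_0; destruct sector_angle_bound.
  assert (Hsin : 0 <= sin (- (INR m * p))) by (apply sin_ge_0; nra).
  rewrite sin_neg in Hsin.
  pose proof sector_radius_pow_nonneg; nra.
Qed.

End Sector.

(* The paper leaves [log 0] undefined; here [ln 0 = 0] gives [Clog 0 = 0], and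
   [1 - t z] may well vanish at one point of [[b, 1]]. *)
Lemma Clog_0 : Clog 0 = 0.
Proof.
  unfold Clog, Carg, ln; rewrite Cmod_0; simpl.
  destruct (Rlt_dec 0 0) as [H|_]; [exfalso; exact (Rlt_irrefl 0 H) | reflexivity].
Qed.

Lemma Cpow_opp_Clog_0 m : Cpow (- Clog 0) m = RtoC (0 ^ m).
Proof. rewrite Clog_0, RtoC_pow; f_equal; apply injective_projections; simpl; ring. Qed.

Section LogPower.

Variables (c : R) (m : nat).
Hypothesis Hc : 0 < c < 1.
Hypothesis Htheta : INR m * atan (PI / Rabs (ln c)) <= PI / 2.

Lemma opp_Clog_sector w : 0 < Cmod w <= c ->
  0 < - ln (Cmod w) /\ INR m * atan (Rabs (- Carg w) / - ln (Cmod w)) <= PI / 2.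
Proof.
  intros Hw.
  assert (Hlnc : ln c < 0) by (rewrite <- ln_1; apply ln_increasing; lra).
  assert (Hlnw : ln (Cmod w) <= ln c) by (apply ln_le; lra).
  rewrite Rabs_left in Htheta by exact Hlnc.
  split; [lra|].
  apply Rle_trans with (2 := Htheta), Rmult_le_compat_l; [apply pos_INR|].
  apply atan_le, Rdiv_le_compat; [|lra].
  rewrite Rabs_Ropp; split; [apply Rabs_pos | apply Carg_bound].
Qed.

Lemma Re_Cpow_opp_Clog_nonneg w : Cmod w <= c -> 0 <= Re (Cpow (- Clog w) m).
Proof.
  intros Hw; destruct (Req_dec (Cmod w) 0) as [H0|H0].
  - apply Cmod_eq_0 in H0; subst w.
    rewrite Cpow_opp_Clog_0; simpl; apply pow_le, Rle_refl.
  - pose proof (Cmod_ge_0 w).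
    destruct (opp_Clog_sector w) as [Hx Hs]; [lra|].
    exact (Re_Cpow_sector_nonneg _ _ _ Hx Hs).
Qed.

Lemma Im_Cpow_opp_Clog_nonpos w : Cmod w <= c -> 0 <= Im w -> Im (Cpow (- Clog w) m) <= 0.
Proof.
  intros Hw Hy; destruct (Req_dec (Cmod w) 0) as [H0|H0].
  - apply Cmod_eq_0 in H0; subst w.
    rewrite Cpow_opp_Clog_0; simpl; lra.
  - pose proof (Cmod_ge_0 w).
    destruct (opp_Clog_sector w) as [Hx Hs]; [lra|].
    apply (Im_Cpow_sector_nonpos _ _ _ Hx Hs).
    pose proof (Carg_nonneg w Hy); lra.
Qed.

Lemma Im_Cpow_opp_Clog_nonneg w : Cmod w <= c -> Im w < 0 -> 0 <= Im (Cpow (- Clog w) m).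
Proof.
  intros Hw Hy.
  assert (Hx : 0 < Cmod w) by (apply Cmod_gt_0; intros ->; simpl in Hy; lra).
  destruct (opp_Clog_sector w) as [Hre Hs]; [lra|].
  apply (Im_Cpow_sector_nonneg _ _ _ Hre Hs).
  pose proof (Carg_neg w Hy); lra.
Qed.

End LogPower.

Definition sign_constant_on (a b : R) (f : R -> R) : Prop :=
  (forall t, a <= t <= b -> 0 <= f t) \/ (forall t, a <= t <= b -> f t <= 0).

Lemma sign_constant_on_scale a b (k : R) (f g : R -> R) :
  (forall t, a <= t <= b -> g t = k * f t) ->
  sign_constant_on a b f -> sign_constant_on a b g.
Proof.
  intros Hg Hf.
  destruct (Rle_dec 0 k) as [Hk|Hk];
    destruct Hf as [Hf|Hf]; [left|right|right|left]; intros t Ht;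
    rewrite (Hg t Ht); specialize (Hf t Ht); nra.
Qed.

Lemma one_sub_scal_eq0_inj (z : C) (s t : R) :
  Cminus (RtoC 1) (Cmult (RtoC s) z) = 0 -> Cminus (RtoC 1) (Cmult (RtoC t) z) = 0 -> s = t.
Proof.
  destruct z as [x y]; intros Hs Ht.
  apply (f_equal fst) in Hs, Ht; simpl in Hs, Ht.
  apply Rmult_eq_reg_r with x; [lra | intros ->; lra].
Qed.

Lemma segment_bound_pos (z : C) (a b c : R) : a < b ->
  (forall t, a <= t <= b -> Cmod (Cminus (RtoC 1) (Cmult (RtoC t) z)) <= c) -> 0 < c.
Proof.
  intros Hab Hbound; apply Rnot_le_lt; intros Hc.
  assert (Hvanish : forall t, a <= t <= b -> Cminus (RtoC 1) (Cmult (RtoC t) z) = 0).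
  { intros t Ht; apply Cmod_eq_0, Rle_antisym; [|apply Cmod_ge_0].
    apply Rle_trans with c; [apply Hbound, Ht | exact Hc]. }
  assert (a = b) by (apply (one_sub_scal_eq0_inj z); apply Hvanish; lra); lra.
Qed.

Theorem lemmaB1 (z : Complex.C) (b Cst : R) (m : nat)
  (hb0 : 0 < b) (hb1 : b < 1) (hC1 : Cst < 1)
  (hbound : forall t : R, b <= t <= 1 ->
     Cmod (Cminus (RtoC 1) (Cmult (RtoC t) z)) <= Cst)
  (hm : (1 <= m)%nat)
  (htheta : INR m * atan (PI / Rabs (ln Cst)) <= PI / 2) :
  ((forall t : R, b <= t <= 1 ->
      0 <= Re (Cpown (Clog (Cminus (RtoC 1) (Cmult (RtoC t) z))) m)) \/
   (forall t : R, b <= t <= 1 ->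
      Re (Cpown (Clog (Cminus (RtoC 1) (Cmult (RtoC t) z))) m) <= 0)) /\
  ((forall t : R, b <= t <= 1 ->
      0 <= Im (Cpown (Clog (Cminus (RtoC 1) (Cmult (RtoC t) z))) m)) \/
   (forall t : R, b <= t <= 1 ->
      Im (Cpown (Clog (Cminus (RtoC 1) (Cmult (RtoC t) z))) m) <= 0)).
Proof.
  assert (Hc : 0 < Cst < 1) by (split; [apply (segment_bound_pos z b 1 Cst) | ]; auto).
  assert (Him : forall t, Im (Cminus (RtoC 1) (Cmult (RtoC t) z)) = - (t * Im z))
    by (intros t; unfold Cminus, Cplus, Copp, Cmult, Im; simpl; ring).
  split.
  - apply (sign_constant_on_scale _ _ ((-1) ^ m)
      (fun t => Re (Cpow (- Clog (Cminus (RtoC 1) (Cmult (RtoC t) z))) m))).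
    + intros t _; now rewrite Cpown_Cpow, Cpow_opp, Re_RtoC_mult.
    + left; intros t Ht; now apply (Re_Cpow_opp_Clog_nonneg Cst), hbound.
  - apply (sign_constant_on_scale _ _ ((-1) ^ m)
      (fun t => Im (Cpow (- Clog (Cminus (RtoC 1) (Cmult (RtoC t) z))) m))).
    + intros t _; now rewrite Cpown_Cpow, Cpow_opp, Im_RtoC_mult.
    + destruct (Rle_dec (Im z) 0) as [Hz|Hz]; [right|left]; intros t Ht;
        [apply (Im_Cpow_opp_Clog_nonpos Cst) | apply (Im_Cpow_opp_Clog_nonneg Cst)];
        auto; rewrite Him; nra.
Qed.
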